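(* Let $d\ge 2$ and let $D$ be obtained by gluing domains $D_1,\dots,D_m\subset T_d$ at a vertex $p$. Then $D$ is optimal if and only if either $p\in\partial D$ and $\sum_{i=1}^m\tau(D_i)+(m-1)\le d-2$, or $p\notin\partial D$ and $\sum_{i=1}^m\tau(D_i)-(d-m)\le d-2$.
   Context: $T_d$ is the $d$-regular tree (connected, acyclic, every vertex of degree $d$). A domain is a finite nonempty connected set $D$ of vertices of $T_d$, identified with its induced subgraph. For $x\in D$, $\deg_D(x)$ is the number of neighbours of $x$ lying in $D$. The (inner vertex) boundary is $\partial D=\{x\in D:\deg_D(x)<d\}$. For $k\ge1$, $I_d(k)=\min\{|\partial D| : D\subset T_d \text{ a domain with } |D|=k\}$, and $D$ is optimal if $|\partial D|=I_d(|D|)$. For $|D|\ge2$, $\tau(D)=\sum_{x\in\partial D}(\deg_D(x)-1)$. Gluing: given domains $D_1,\dots,D_m$ with $|D_i|\ge 2$, $2\le m\le d$, and a vertex $p$ with $p\in\partial D_i$ for all $i$, one says $D$ is obtained by gluing $D_1,\dots,D_m$ at $p$ if $D=\bigcup_{i=1}^m D_i$ and $D_i\cap D_j=\{p\}$ for all $i\ne j$. *)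

From mathcomp Require Import all_boot all_order all_algebra.
From mathcomp Require Import finmap.
Set Implicit Arguments. Unset Strict Implicit. Unset Printing Implicit Defensive.
Local Open Scope fset_scope.

(* Model of the d-regular tree T_d:
   vertices are words [:: a_0; a_1; ...; a_k] with a_0 < d and a_j < d-1 (j >= 1);
   the empty word is the root.  The root has the d children [:: a], a < d; every
   other vertex u has its parent (drop last letter) and d-1 children rcons u b,
   b < d-1.  Hence every vertex has degree d, and the graph is a tree. *)
Definition tvertex (d : nat) (v : seq nat) : bool :=
  match v with
  | [::] => true
  | a :: s => (a < d) && all (fun b => b < d.-1) s
  end.

Definition tchild (u v : seq nat) : bool :=
  (size v == (size u).+1) && (take (size u) v == u).

Definition tadj (u v : seq nat) : bool := tchild u v || tchild v u.

Definition domain (d : nat) (D : {fset seq nat}) : Prop :=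
  [/\ D != fset0,
      (forall x, x \in D -> tvertex d x) &
      (forall x y, x \in D -> y \in D ->
         exists p : seq (seq nat),
           [/\ path tadj x p, last x p = y & all (fun z => z \in D) p])].

Definition degD (D : {fset seq nat}) (x : seq nat) : nat :=
  #|` [fset y in D | tadj x y] |.

Definition bdry (d : nat) (D : {fset seq nat}) : {fset seq nat} :=
  [fset x in D | degD D x < d].

Definition optimal (d : nat) (D : {fset seq nat}) : Prop :=
  domain d D /\
  forall D' : {fset seq nat}, domain d D' -> #|` D'| = #|` D| ->
    #|` bdry d D| <= #|` bdry d D'|.

(* tau(D) = sum_{x in ∂D} (deg_D(x) - 1)  (used for |D| >= 2, where deg_D(x) >= 1) *)
Definition tau (d : nat) (D : {fset seq nat}) : nat :=
  \sum_(x <- bdry d D) (degD D x - 1).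

Definition glued (d m : nat) (D : {fset seq nat}) (Ds : 'I_m -> {fset seq nat})
    (p : seq nat) : Prop :=
  [/\ 2 <= m <= d,
      (forall i, domain d (Ds i) /\ 2 <= #|` Ds i|),
      (forall i, p \in bdry d (Ds i)),
      (forall x, x \in D <-> exists i, x \in Ds i) &
      (forall i j, i != j -> Ds i `&` Ds j = [fset p])].

From mathcomp Require Import all_boot all_order all_algebra.
From mathcomp Require Import finmap zify.
Set Implicit Arguments. Unset Strict Implicit. Unset Printing Implicit Defensive.

(* A domain D with |D| >= 2 is a tree with |D| - 1 edges, so its degree sum is
   2|D| - 2; splitting it into the boundary part tau(D) + |bdry D| and the interior
   part d(|D| - |bdry D|) gives

     tau(D) + (d - 2)|D| + 2 = (d - 1)|bdry D|.

   Among domains of a fixed size, |bdry D| is therefore minimal exactly when tau(D)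
   is, and tau moves in steps of d - 1.  Adding vertices one at a time next to a
   boundary vertex that is the only possible non-leaf of the boundary preserves
   this shape, so every size is attained with tau <= d - 2; hence D is optimal
   iff tau(D) <= d - 2.
   For a gluing at p, no edge joins two different pieces except through p, hence
   sum |D_i| = |D| + m - 1 and sum |bdry D_i| = |bdry D| + m - [p in bdry D];
   summing the identity over the pieces yields tau(D) = sum tau(D_i) + m - 1 when
   p is a boundary vertex of D and tau(D) = sum tau(D_i) + m - d otherwise. *)

Lemma card_fset_sep (T : choiceType) (A : {fset T}) (P : pred T) :
  #|` [fset x in A | P x]%fset| = count P A.
Proof. by rewrite card_fset_sum1 -big_fset_condE -sum1_count big_mkcond. Qed.

Lemma card_fset_sub (T : choiceType) (A D : {fset T}) : {subset A <= D} ->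
  #|` A| = count (mem A) D.
Proof.
move=> AD; rewrite -card_fset_sep; congr (size (enum_fset _)).
by apply/fsetP => x; rewrite !inE /= andb_idl // => /AD.
Qed.

Lemma count_sumn (T : Type) (P : pred T) (s : seq T) :
  count P s = \sum_(x <- s) P x.
Proof. by elim: s => [|x s IH]; rewrite ?big_nil ?big_cons //= IH. Qed.

Lemma sum_card_pieces (T : choiceType) m (A : 'I_m -> {fset T}) (D : {fset T}) p
    (F : T -> nat) :
  p \in D -> (forall i, {subset A i <= D}) ->
  (forall x, x \in D -> \sum_i (x \in A i) = if x == p then m else F x) ->
  \sum_i #|` A i| + F p = m + \sum_(x <- D) F x.
Proof.
move=> pD AD mult.
under eq_bigr do rewrite (card_fset_sub (AD _)) count_sumn.
rewrite exchange_big /= (eq_big_seq _ mult) (bigD1_seq p) ?fset_uniq //= eqxx.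
rewrite [in RHS](bigD1_seq p) ?fset_uniq //= -addnA [_ + F p]addnC; do 2 congr (_ + _).
by apply: eq_bigr => x /negbTE->.
Qed.

Lemma seq_extremum (T : eqType) (r : rel T) (s : seq T) :
  total r -> transitive r -> s != [::] -> exists2 x, x \in s & {in s, forall y, r y x}.
Proof.
move=> r_total r_trans; have r_refl a : r a a by rewrite -[r a a]orbb r_total.
elim: s => [|a s IH] // _; have [->|/IH[x xs max_x]] := eqVneq s [::].
  by exists a => [|y]; rewrite ?mem_head // inE => /eqP->; apply: r_refl.
have [ax|/negbTE xa] := boolP (r a x).
  by exists x => [|y]; rewrite inE ?xs ?orbT // => /orP[/eqP->|/max_x].
have {}xa : r x a by move: (r_total x a); rewrite xa orbF.
exists a => [|y]; rewrite ?mem_head // inE => /orP[/eqP->|/max_x yx].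
  exact: r_refl.
exact: r_trans yx xa.
Qed.

(** * Parents, children and subtrees *)

Definition tparent (u : seq nat) : seq nat := take (size u).-1 u.

Lemma tchild_rcons u c : tchild u (rcons u c).
Proof. by rewrite /tchild size_rcons eqxx /= -cats1 take_size_cat. Qed.

Lemma tchildE u v : tchild u v = (v == rcons u (last 0 v)).
Proof.
apply/idP/eqP => [|->]; last exact: tchild_rcons.
case/lastP: v => [|v c]; rewrite /tchild ?size_rcons //= eqSS => /andP[/eqP <-].
by rewrite -cats1 take_size_cat // => /eqP->; rewrite cats1 last_rcons.
Qed.

Lemma size_tchild u v : tchild u v -> size v = (size u).+1.
Proof. by case/andP=> /eqP. Qed.

Lemma tparent_rcons u c : tparent (rcons u c) = u.
Proof. by rewrite /tparent size_rcons -cats1 take_size_cat. Qed.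

Lemma tparent_tchild u v : tchild u v -> tparent v = u.
Proof. by rewrite tchildE => /eqP->; rewrite tparent_rcons. Qed.

Lemma tchild_tparent v : v != [::] -> tchild (tparent v) v.
Proof. by case/lastP: v => // v c _; rewrite tparent_rcons tchild_rcons. Qed.

Lemma size_tparent v : v != [::] -> size (tparent v) < size v.
Proof. by move/tchild_tparent/size_tchild->. Qed.

Lemma tadj_sym : symmetric tadj.
Proof. by move=> u v; rewrite /tadj orbC. Qed.

Lemma tadj_irr u : tadj u u = false.
Proof. by rewrite /tadj orbb; apply/negP => /size_tchild/n_Sn. Qed.

(* [prefix y z] says that [z] lies in the subtree rooted at [y]. *)
Lemma prefix_tchild y z z' : prefix y z -> tchild z z' -> prefix y z'.
Proof.
by move=> yz; rewrite tchildE => /eqP->; exact: prefix_trans yz (prefix_rcons _ _).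
Qed.

Lemma prefix_tparent y z : prefix y z -> z != y -> prefix y (tparent z).
Proof.
case/prefixP=> s ->; case/lastP: s => [|s c]; first by rewrite cats0 eqxx.
by rewrite -rcons_cat tparent_rcons prefix_prefix.
Qed.

Lemma tadj_leave_subtree y z z' :
  tadj z z' -> prefix y z -> ~~ prefix y z' -> z = y /\ z' = tparent y.
Proof.
case/orP=> [zz' yz /negP[]|zz' yz nyz']; first exact: prefix_tchild yz zz'.
have [<-|zy] := eqVneq z y; first by rewrite (tparent_tchild zz').
by have := prefix_tparent yz zy; rewrite (tparent_tchild zz') (negbTE nyz').
Qed.

Lemma path_crossing_edge (T : eqType) (e : rel T) (P : pred T) a s :
  path e a s -> P a -> ~~ P (last a s) ->
  exists z z', [/\ z \in a :: s, z' \in s, e z z', P z & ~~ P z'].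
Proof.
elim: s a => [|b s IH] a /=; first by move=> _ ->.
case/andP=> ab bs Pa; have [Pb /(IH b bs Pb)|nPb _] := boolP (P b).
  by case=> z [z' [zs z's *]]; exists z, z'; split; rewrite // inE ?zs ?z's orbT.
by exists a, b; rewrite !inE !eqxx.
Qed.

Lemma path_leave_subtree (S : pred (seq nat)) y a s :
  path tadj a s -> a \in S -> all S s -> prefix y a -> ~~ prefix y (last a s) ->
  y \in S /\ tparent y \in S.
Proof.
move=> a_s aS sS ya nyl.
have [z [z' [zs z's zz' yz nyz']]] := path_crossing_edge a_s ya nyl.
have [zy z'y] := tadj_leave_subtree zz' yz nyz'; subst z z'.
split; last exact: (allP sS).
by move: zs; rewrite inE => /orP[/eqP->|/(allP sS)].
Qed.

Lemma path_enter_subtree (S : pred (seq nat)) y a s :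
  path tadj a s -> all S s -> ~~ prefix y a -> prefix y (last a s) -> y \in S.
Proof.
move=> a_s sS nya yl.
have [|z [z' [_ z's zz' nyz]]] := path_crossing_edge (P := fun z => ~~ prefix y z) a_s nya.
  by rewrite negbK.
rewrite negbK tadj_sym in zz' * => yz'.
have [z'y _] := tadj_leave_subtree zz' yz' nyz; subst z'.
exact: (allP sS).
Qed.

(** * Domains and their degree sums *)

Definition parent_in (D : {fset seq nat}) (x : seq nat) : bool :=
  (x != [::]) && (tparent x \in D).

Lemma domain_connected d D x y : domain d D -> x \in D -> y \in D ->
  exists s, [/\ path tadj x s, last x s = y & all (fun z => z \in D) s].
Proof. by case=> _ _; apply. Qed.

Lemma domain_enum_nonempty d D : domain d D -> (D : seq (seq nat)) != [::].
Proof. by case=> D0 _ _; rewrite -size_eq0 -lt0n cardfs_gt0. Qed.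

Lemma domain_tparent_mem d E a b : domain d E -> a \in E -> b \in E -> a != b ->
  size b <= size a -> tparent a \in E.
Proof.
move=> dE aE bE ab ba; have [s [a_s sb sE]] := domain_connected dE aE bE.
suff /(path_leave_subtree a_s aE sE (prefix_refl a))[] : ~~ prefix a (last a s) by [].
by rewrite sb; apply: contra ab; rewrite prefixE take_oversize // eq_sym.
Qed.

Lemma domain_root_uniq d D x y : domain d D -> x \in D -> y \in D ->
  ~~ parent_in D x -> ~~ parent_in D y -> x = y.
Proof.
move=> dD; wlog yx : x y / size y <= size x => [hw|] xD yD rx ry.
  by case: (leqP (size y) (size x)) => [|/ltnW] h; [apply: hw | apply/esym/hw].
have [//|xy] := eqVneq x y.
move: rx; rewrite /parent_in (domain_tparent_mem dD xD yD xy yx) andbT negbK => /eqP x0.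
by move: yx; rewrite x0 leqn0 size_eq0 => /eqP.
Qed.

Lemma domain_root_exists d D : domain d D -> exists2 x, x \in D & ~~ parent_in D x.
Proof.
move=> dD; have [x xD min_x] := @seq_extremum _ (fun a b => size b <= size a) D
  (fun a b => leq_total _ _) (fun b a c ba cb => leq_trans cb ba)
  (domain_enum_nonempty dD).
by exists x => //; apply/andP => -[x0 /min_x]; rewrite leqNgt size_tparent.
Qed.

Lemma count_domain_root d D : domain d D -> count (predC (parent_in D)) D = 1.
Proof.
move=> dD; have [r rD nr] := domain_root_exists dD.
rewrite (@eq_in_count _ _ (pred1 r)) ?count_uniq_mem ?fset_uniq ?rD //.
move=> x xD /=; apply/idP/eqP => [nx|->//]; exact: domain_root_uniq dD xD rD nx nr.
Qed.

Lemma count_tchild_parent_in (D : {fset seq nat}) x :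
  count (tchild^~ x) D = parent_in D x.
Proof.
rewrite /parent_in; have [->|x0] /= := eqVneq x [::].
  by apply/eqP; rewrite -leqn0 leqNgt -has_count; apply/hasP => -[y _ /size_tchild].
rewrite (@eq_in_count _ _ (pred1 (tparent x))) ?count_uniq_mem ?fset_uniq //.
move=> y _ /=; apply/idP/eqP => [/tparent_tchild //|->]; exact: tchild_tparent.
Qed.

Lemma degD_split (D : {fset seq nat}) x :
  degD D x = count (tchild x) D + parent_in D x.
Proof.
rewrite /degD card_fset_sep -count_tchild_parent_in -count_predUI.
rewrite [X in _ + X](eq_count (a2 := pred0)) ?count_pred0 ?addn0 // => y /=.
by apply/andP => -[/size_tchild ? /size_tchild ?]; lia.
Qed.

Lemma sum_degD d D : domain d D -> \sum_(x <- D) degD D x = 2 * (#|` D| - 1).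
Proof.
move=> dD; under eq_bigr do rewrite degD_split; rewrite big_split /=.
have -> : \sum_(x <- D) count (tchild x) D = \sum_(x <- D) parent_in D x.
  under eq_bigr do rewrite count_sumn; rewrite exchange_big /=.
  by apply: eq_bigr => y _; rewrite -count_sumn count_tchild_parent_in.
rewrite -count_sumn -(count_predC (parent_in D)) (count_domain_root dD).
by rewrite addnK mul2n addnn.
Qed.

(** * Boundary and optimality *)

Definition tnbrs (d : nat) (x : seq nat) : seq (seq nat) :=
  if x == [::] then [seq [:: a] | a <- iota 0 d]
  else tparent x :: [seq rcons x b | b <- iota 0 d.-1].

Lemma size_tnbrs d x : 0 < d -> size (tnbrs d x) = d.
Proof. by rewrite /tnbrs; case: ifP => _ /=; rewrite size_map size_iota //; case: d. Qed.

Lemma uniq_tnbrs d x : uniq (tnbrs d x).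
Proof.
rewrite /tnbrs; case: ifPn => [_|x0]; first by rewrite map_inj_uniq ?iota_uniq // => u v [].
rewrite cons_uniq map_inj_uniq ?iota_uniq ?andbT => [|u v /rcons_inj[] //].
apply/mapP => -[b _ xb]; have := size_tparent x0.
by rewrite xb size_rcons ltnNge leqnSn.
Qed.

Lemma tvertex_rcons d x c : tvertex d x ->
  tvertex d (rcons x c) = (if x is [::] then c < d else c < d.-1).
Proof.
by case: x => [|a s] /=; rewrite ?andbT // => /andP[-> s_d]; rewrite all_rcons s_d andbT.
Qed.

Lemma tvertex_tparent d x : tvertex d x -> tvertex d (tparent x).
Proof.
case/lastP: x => [//|x c]; rewrite tparent_rcons.
case: x => [|a s] //= /andP[-> /allP s_d]; apply/allP => b bs.
by apply: s_d; rewrite mem_rcons inE bs orbT.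
Qed.

Lemma mem_tnbrs d x y : tvertex d x -> (y \in tnbrs d x) = tadj x y && tvertex d y.
Proof.
move=> tx; rewrite /tnbrs; apply/idP/andP => [|[/orP[xy|yx] ty]].
- case: ifPn => [/eqP x0|x0].
    by case/mapP => c; rewrite mem_iota x0 => /andP[_ cd] ->; rewrite /tadj /tchild /= cd.
  rewrite inE => /orP[/eqP->|/mapP[c]].
    by rewrite /tadj tchild_tparent ?orbT ?tvertex_tparent.
  rewrite mem_iota => /andP[_ cd] ->; rewrite /tadj tchild_rcons tvertex_rcons //.
  by case: (x) x0 cd.
- move: (xy) ty; rewrite tchildE => /eqP-> {xy}; rewrite tvertex_rcons //.
  case: ifPn => [/eqP-> cd|x0 cd].
    by apply/mapP; exists (last 0 y); rewrite ?mem_iota.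
  rewrite inE; apply/orP; right; apply/mapP; exists (last 0 y); rewrite ?mem_iota //.
  by case: (x) x0 cd.
- have x0 : x != [::] by apply: contraTneq yx => ->; apply/negP => /size_tchild.
  by rewrite (negbTE x0) (tparent_tchild yx) mem_head.
Qed.

Lemma degD_tnbrs d D x : (forall y, y \in D -> tvertex d y) -> tvertex d x ->
  degD D x = count (mem D) (tnbrs d x).
Proof.
move=> Dv tx; rewrite /degD card_fset_sep -!size_filter; apply/perm_size/uniq_perm.
- by rewrite filter_uniq ?fset_uniq.
- by rewrite filter_uniq ?uniq_tnbrs.
move=> y; rewrite !mem_filter mem_tnbrs //.
by rewrite [mem D y]/= andbC; case yD: (y \in D); rewrite //= Dv ?andbT.
Qed.

Lemma degD_le d D x : domain d D -> x \in D -> 0 < d -> degD D x <= d.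
Proof.
case=> _ Dv _ xD d0.
by rewrite (degD_tnbrs Dv (Dv x xD)) -[X in _ <= X](size_tnbrs x d0) count_size.
Qed.

Lemma bdry_sub d D : {subset bdry d D <= D}.
Proof. by move=> x; rewrite /bdry !inE /= => /andP[]. Qed.

Lemma bdry_outside_nbr d E x : 0 < d -> domain d E -> x \in bdry d E ->
  exists2 y, tadj x y && tvertex d y & y \notin E.
Proof.
move=> d0 [_ Ev _]; rewrite /bdry !inE /= => /andP[xE].
rewrite (degD_tnbrs Ev (Ev x xE)) -{2}(size_tnbrs x d0) -(count_predC (mem E)).
rewrite -{1}[count _ _]addn0 ltn_add2l -has_count => /hasP[y yn yE].
by exists y; rewrite // -mem_tnbrs ?Ev.
Qed.

Lemma degD_gt0 d D x : domain d D -> 2 <= #|` D| -> x \in D -> 0 < degD D x.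
Proof.
move=> dD D2 xD; have [y yD yx] : exists2 y, y \in D & y != x.
  have [/hasP[y yD yx]|/hasPn Dx] := boolP (has (predC1 x) D); first by exists y.
  suff : #|` D| <= #|` [fset x]%fset| by rewrite cardfs1 leqNgt D2.
  by apply/fsubset_leq_card/fsubsetP => z /Dx /= /negPn /eqP->; rewrite inE.
have [[|b s] [/= + xsy]] := domain_connected dD xD yD; first by rewrite -xsy eqxx in yx.
case/andP=> xb _ /andP[bD _].
by rewrite /degD card_fset_sep -has_count; apply/hasP; exists b.
Qed.

Lemma tau_card_bdry d D : 2 <= d -> domain d D -> 2 <= #|` D| ->
  tau d D + (d - 2) * #|` D| + 2 = (d - 1) * #|` bdry d D|.
Proof.
move=> d2 dD D2; have := sum_degD dD; rewrite (bigID (fun x => degD D x < d)) /=.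
have -> : \sum_(x <- D | degD D x < d) degD D x = tau d D + #|` bdry d D|.
  rewrite /tau /bdry -big_fset_condE card_fset_sep -sum1_count -big_split /=.
  rewrite big_seq_cond [RHS]big_seq_cond; apply: eq_bigr => x /andP[xD _].
  by have := degD_gt0 dD D2 xD; lia.
have -> : \sum_(x <- D | ~~ (degD D x < d)) degD D x =
    d * count (predC (fun x => degD D x < d)) D.
  rewrite -sum1_count big_distrr big_seq_cond [RHS]big_seq_cond /=.
  by apply: eq_bigr => x /andP[xD]; have := degD_le dD xD (ltnW d2); lia.
rewrite -(count_predC (fun x => degD D x < d)) /bdry card_fset_sep in D2 *.
case: d d2 D2 {dD} => [|[|e]] // _ D2; rewrite !subn1 subn2 /=; nia.
Qed.

Lemma bdry_exists d E : 2 <= d -> domain d E -> exists x, x \in bdry d E.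
Proof.
move=> d2 dE; have [x xE max_x] := @seq_extremum _ (fun a b => size a <= size b) E
  (fun a b => leq_total _ _) (fun b a c ab bc => leq_trans ab bc)
  (domain_enum_nonempty dE).
exists x; rewrite /bdry !inE /= xE degD_split.
have -> : count (tchild x) E = 0.
  apply/eqP; rewrite -leqn0 leqNgt -has_count.
  apply/hasP => -[y /max_x yx /size_tchild xy].
  by have := leq_trans (eq_leq (esym xy)) yx; rewrite ltnn.
by apply: leq_ltn_trans d2; rewrite add0n leq_b1.
Qed.

Lemma degD_fsetU1 (E : {fset seq nat}) y z : y \notin E ->
  degD (y |` E)%fset z = tadj z y + degD E z.
Proof. by move=> yE; rewrite /degD !card_fset_sep !count_sumn big_fsetU1. Qed.

Lemma domain_fsetU1 d E x y : domain d E -> x \in E -> tadj x y -> tvertex d y ->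
  domain d (y |` E)%fset.
Proof.
move=> [_ Ev Econn] xE xy ty.
have sub s : all (fun z => z \in E) s -> all (fun z => z \in (y |` E)%fset) s.
  by apply: sub_all => z zE; rewrite !inE zE orbT.
split.
- by apply/fset0Pn; exists y; rewrite fset1U1.
- by move=> z; rewrite !inE => /orP[/eqP->|/Ev].
move=> a b; rewrite !inE => /orP[/eqP->|aE] /orP[/eqP->|bE].
- by exists [::].
- have [s [xs <- sE]] := Econn _ _ xE bE.
  by exists (x :: s); rewrite /= tadj_sym xy xs !inE xE orbT sub.
- have [s [as_ sx sE]] := Econn _ _ aE xE.
  by exists (rcons s y); rewrite rcons_path as_ sx xy last_rcons all_rcons !inE eqxx sub.
- by have [s [as_ sb sE]] := Econn _ _ aE bE; exists s; rewrite as_ sb sub.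
Qed.

Lemma domain_outside_nbr_uniq d E x z y : domain d E -> x \in E -> z \in E ->
  y \notin E -> tadj x y -> tadj z y -> x = z.
Proof.
move=> dE xE zE yE; have [//|xz] := eqVneq x z.
have no_child a b : a \in E -> b \in E -> a != b -> size b <= size a -> tchild y a -> False.
  move=> aE bE ab ba /tparent_tchild ya.
  by have := domain_tparent_mem dE aE bE ab ba; rewrite ya (negbTE yE).
case/orP=> [xy|yx] /orP[zy|yz].
- by rewrite -(tparent_tchild xy) (tparent_tchild zy).
- case: (no_child z x) => //; first by rewrite eq_sym.
  by rewrite (size_tchild yz) (size_tchild xy) leqW.
- by case: (no_child x z) => //; rewrite (size_tchild yx) (size_tchild zy) leqW.
- by case: (no_child x z) => //; rewrite (size_tchild yx) (size_tchild yz).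
Qed.

Definition leaves_but_one d (E : {fset seq nat}) : Prop :=
  exists v, forall z, z \in bdry d E -> z != v -> degD E z = 1.

Lemma tau_leaves_but_one d E : leaves_but_one d E -> tau d E <= d - 2.
Proof.
case=> v leaf_v; rewrite /tau; have [vb|vb] := boolP (v \in bdry d E).
  rewrite (bigD1_seq v) ?fset_uniq //= big1_seq => [|z /andP[zv /leaf_v->//]].
  by move: vb; rewrite /bdry !inE /= => /andP[_]; lia.
by rewrite big1_seq // => z /andP[_ zb]; rewrite leaf_v //; apply: contraNneq vb => <-.
Qed.

Lemma leaves_but_one_fsetU1 d E : 2 <= d -> domain d E -> leaves_but_one d E ->
  exists y, [/\ y \notin E, domain d (y |` E)%fset & leaves_but_one d (y |` E)%fset].
Proof.
move=> d2 dE [v leaf_v].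
have [x xb leaf_x] : exists2 x, x \in bdry d E &
    forall z, z \in bdry d E -> z != x -> degD E z = 1.
  have [vb|vb] := boolP (v \in bdry d E); first by exists v.
  have [x xb] := bdry_exists d2 dE; exists x => // z zb _.
  by apply: leaf_v => //; apply: contraNneq vb => <-.
have xE := bdry_sub xb.
have [y /andP[xy ty] yE] := bdry_outside_nbr (ltnW d2) dE xb.
exists y; split => //; first exact: domain_fsetU1 dE xE xy ty.
exists x => z; rewrite /bdry !inE /= degD_fsetU1 // => /andP[/orP[/eqP->|zE] zdeg] zx.
  rewrite tadj_irr /degD card_fset_sep (@eq_in_count _ _ (pred1 x)).
    by rewrite count_uniq_mem ?fset_uniq ?xE.
  move=> w wE /=; apply/idP/eqP => [wy|->]; last by rewrite tadj_sym.
  by apply: esym (domain_outside_nbr_uniq dE xE wE yE xy _); rewrite tadj_sym.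
have zy : tadj z y = false.
  apply/negP => zy; move/eqP: zx; apply.
  exact: domain_outside_nbr_uniq dE zE xE yE zy xy.
by move: zdeg; rewrite zy => zdeg; apply: leaf_x; rewrite // /bdry !inE /= zE.
Qed.

Lemma exists_domain_leaves_but_one d k : 2 <= d -> 0 < k ->
  exists E, [/\ domain d E, #|` E| = k & leaves_but_one d E].
Proof.
move=> d2; elim: k => [|[|k] IH] // _.
  exists [fset [::]]%fset; split; first split.
  - by apply/fset0Pn; exists [::]; rewrite inE.
  - by move=> z; rewrite inE => /eqP->.
  - by move=> a b; rewrite !inE => /eqP-> /eqP->; exists [::].
  - exact: cardfs1.
  - by exists [::] => z /bdry_sub; rewrite inE => ->.
have [E [dE <- leafE]] := IH isT.
have [y [yE dyE leaf_yE]] := leaves_but_one_fsetU1 d2 dE leafE.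
by exists (y |` E)%fset; rewrite cardfsU1 yE.
Qed.

Lemma optimal_tau_le d D : 2 <= d -> domain d D -> 2 <= #|` D| ->
  optimal d D <-> tau d D <= d - 2.
Proof.
move=> d2 dD D2; have tauD := tau_card_bdry d2 dD D2.
split=> [[_ opt]|small_tau].
  have [E [dE cardE leafE]] := exists_domain_leaves_but_one d2 (ltnW D2).
  have := tau_card_bdry d2 dE; rewrite cardE => /(_ D2) tauE.
  have := opt E dE cardE; rewrite -(leq_pmul2l (_ : 0 < d - 1)); last by lia.
  by move: (tau_leaves_but_one leafE); lia.
split=> // D' dD' cardD'; rewrite leqNgt; apply/negP => lt_bdry.
have := tau_card_bdry d2 dD'; rewrite cardD' => /(_ D2) tauD'.
have : (d - 1) * #|` bdry d D'| + (d - 1) <= (d - 1) * #|` bdry d D|.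
  by rewrite -mulnSr leq_mul2l lt_bdry orbT.
lia.
Qed.

(** * Gluing *)

(* A path inside [B] from [w] to [p] cannot leave the subtree of [w] (its exit is
   [x], not in [B]), so [p] lies below [w]; then a path inside [A] from [x] to [p]
   must enter that subtree through [w], which is not in [A]. *)
Lemma no_tchild_across d A B p x w : domain d A -> domain d B -> p \in A -> p \in B ->
  x \in A -> x \notin B -> w \in B -> w \notin A -> ~~ tchild x w.
Proof.
move=> dA dB pA pB xA xB wB wA; apply/negP => xw.
have [s [w_s sp sB]] := domain_connected dB wB pB.
have wp : prefix w p.
  apply/negPn/negP; rewrite -sp => nwp.
  have [_] := path_leave_subtree w_s wB sB (prefix_refl w) nwp.
  by rewrite (tparent_tchild xw) (negbTE xB).
have [s' [x_s' s'p s'A]] := domain_connected dA xA pA.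
have nwx : ~~ prefix w x by apply/negP => /size_prefix; rewrite (size_tchild xw) ltnn.
by have := path_enter_subtree x_s' s'A nwx; rewrite s'p (negbTE wA) => /(_ wp).
Qed.

Lemma no_tadj_across d A B p x w : domain d A -> domain d B -> p \in A -> p \in B ->
  x \in A -> x \notin B -> w \in B -> w \notin A -> ~~ tadj x w.
Proof.
move=> dA dB pA pB xA xB wB wA; rewrite negb_or.
by rewrite (no_tchild_across dA dB pA pB) // (no_tchild_across dB dA pB pA).
Qed.

Section Gluing.
Variables (d m : nat) (D : {fset seq nat}) (Ds : 'I_m -> {fset seq nat}) (p : seq nat).
Hypothesis gl : glued d D Ds p.

Lemma glued_piece_domain i : domain d (Ds i).
Proof. by case: gl => _ /(_ i)[]. Qed.

Lemma glued_piece_card i : 2 <= #|` Ds i|.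
Proof. by case: gl => _ /(_ i)[]. Qed.

Lemma glued_p_bdry i : p \in bdry d (Ds i).
Proof. by case: gl. Qed.

Lemma glued_p_mem i : p \in Ds i.
Proof. exact: bdry_sub (glued_p_bdry i). Qed.

Lemma glued_memP x : x \in D <-> exists i, x \in Ds i.
Proof. by case: gl. Qed.

Lemma glued_sub i : {subset Ds i <= D}.
Proof. by move=> x xi; apply/glued_memP; exists i. Qed.

Lemma glued_m : 2 <= m <= d.
Proof. by case: gl. Qed.

Let i0 : 'I_m := Ordinal (ltnW (proj1 (andP glued_m))).

Lemma glued_p_memD : p \in D.
Proof. exact: glued_sub (glued_p_mem i0). Qed.

Lemma glued_meet i j x : i != j -> x \in Ds i -> x \in Ds j -> x = p.
Proof.
case: gl => _ _ _ _ meet ij xi xj.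
by apply/fset1P; rewrite -(meet i j ij) in_fsetI xi xj.
Qed.

Lemma glued_degD i x : x \in Ds i -> x != p -> degD D x = degD (Ds i) x.
Proof.
move=> xi xp; rewrite /degD; congr (size (enum_fset _)); apply/fsetP => w.
rewrite !inE /=; apply/andP/andP => -[wD xw]; split=> //; last exact: glued_sub wD.
have [j wj] := (glued_memP w).1 wD; have [->//|ij] := eqVneq i j.
have [->|wp] := eqVneq w p; first exact: glued_p_mem.
have xj : x \notin Ds j by apply: contra xp => xj; rewrite (glued_meet ij xi xj).
have wi : w \notin Ds i by apply: contra wp => wi; rewrite (glued_meet ij wi wj).
by have := no_tadj_across (glued_piece_domain i) (glued_piece_domain j)
  (glued_p_mem i) (glued_p_mem j) xi xj wj wi; rewrite xw.
Qed.

Lemma glued_domain : domain d D.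
Proof.
split.
- by apply/fset0Pn; exists p; apply: glued_p_memD.
- by move=> x /glued_memP[i]; case: (glued_piece_domain i) => _ Dv _; apply: Dv.
move=> x y /glued_memP[i xi] /glued_memP[j yj].
have [s1 [x_s1 s1p s1i]] := domain_connected (glued_piece_domain i) xi (glued_p_mem i).
have [s2 [p_s2 s2y s2j]] := domain_connected (glued_piece_domain j) (glued_p_mem j) yj.
exists (s1 ++ s2); rewrite cat_path last_cat all_cat x_s1 s1p p_s2 s2y; split=> //.
by rewrite (sub_all _ s1i) ?(sub_all _ s2j) // => z; apply: glued_sub.
Qed.

Lemma glued_card_ge2 : 2 <= #|` D|.
Proof.
apply: leq_trans (glued_piece_card i0) _; apply/fsubset_leq_card/fsubsetP.
exact: glued_sub.
Qed.

Lemma glued_card : \sum_i #|` Ds i| + 1 = m + #|` D|.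
Proof.
rewrite -[#|` D|]sum1_size; apply: sum_card_pieces glued_p_memD glued_sub _ => x xD.
have [->|xp] := eqVneq x p.
  by rewrite (eq_bigr (fun=> 1)) ?sum1_card ?card_ord // => i _; rewrite glued_p_mem.
have [i xi] := (glued_memP x).1 xD; rewrite (bigD1 i) //= xi big1 // => j ji.
by apply/eqP; rewrite eqb0; apply: contra xp => xj; rewrite (glued_meet ji xj xi).
Qed.

Lemma glued_card_bdry : \sum_i #|` bdry d (Ds i)| + (p \in bdry d D) = m + #|` bdry d D|.
Proof.
rewrite [#|` bdry d D|](card_fset_sub (@bdry_sub d D)) count_sumn.
apply: sum_card_pieces glued_p_memD (fun i x xb => glued_sub (bdry_sub xb)) _ => x xD.
have [->|xp] := eqVneq x p.
  by rewrite (eq_bigr (fun=> 1)) ?sum1_card ?card_ord // => i _; rewrite glued_p_bdry.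
have [i xi] := (glued_memP x).1 xD; rewrite (bigD1 i) //= big1 ?addn0.
  by rewrite /bdry !inE /= xi xD (glued_degD xi xp).
move=> j ji; apply/eqP; rewrite eqb0; apply: contra xp => /bdry_sub xj.
by rewrite (glued_meet ji xj xi).
Qed.

Lemma glued_tau :
  tau d D + d = \sum_i tau d (Ds i) + m + (p \in bdry d D) * (d - 1).
Proof.
have /andP[m2 md] := glued_m; have d2 := leq_trans m2 md.
have tauD := tau_card_bdry d2 glued_domain glued_card_ge2.
have tau_pieces : \sum_i (tau d (Ds i) + (d - 2) * #|` Ds i| + 2) =
    \sum_i (d - 1) * #|` bdry d (Ds i)|.
  apply: eq_bigr => i _.
  exact: tau_card_bdry d2 (glued_piece_domain i) (glued_piece_card i).
rewrite !big_split -!big_distrr /= sum_nat_const card_ord in tau_pieces.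
move: tauD tau_pieces glued_card glued_card_bdry.
move: (\sum_i tau d (Ds i))%N (\sum_i #|` Ds i|)%N (\sum_i #|` bdry d (Ds i)|)%N.
move: (tau d D) #|` D| #|` bdry d D| (p \in bdry d D) => t k b [] T K B /=; nia.
Qed.
End Gluing.

Unset Implicit Arguments.
Local Open Scope ring_scope.

Theorem mainTheorem13 (d m : nat) (D : {fset seq nat})
    (Ds : 'I_m -> {fset seq nat}) (p : seq nat) :
  (2 <= d)%N -> glued d D Ds p ->
  (optimal d D <->
     ((p \in bdry d D) /\
        (\sum_(i < m) tau d (Ds i))%N%:Z + (m%:Z - 1) <= d%:Z - 2)
     \/
     ((p \notin bdry d D) /\
        (\sum_(i < m) tau d (Ds i))%N%:Z - (d%:Z - m%:Z) <= d%:Z - 2)).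
Proof.
move=> d2 gl; rewrite (optimal_tau_le d2 (glued_domain gl) (glued_card_ge2 gl)).
move: (glued_tau gl); case: (p \in bdry d D) => /= tauD.
- by split=> [tau_le|[[_ tau_le]|[]//]]; [left|]; lia.
- by split=> [tau_le|[[]//|[_ tau_le]]]; [right|]; lia.
Qed.
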